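(* Let $\Omega$ be a compact metric space, $\varphi:\Omega\to\Omega$ continuous, and let $\mathcal{V}=\{V_n\}\subset\mathcal{L}(X^* )$ be an ergodic operator sequence converging in the $\mathrm{W^*O}$-topology to an operator $Q$. Then for every $\varphi$-ergodic Borel probability measure $\mu$ on $\Omega$ the set $\Omega_{\mu,\mathcal{V}}=\{\omega\in\Omega:Q\delta_\omega=\mu\}$ is a Borel set with $\mu(\Omega_{\mu,\mathcal{V}})=1$.
   Context: $X=C(\Omega)$, $X^*$ the space of Radon measures, pairing $(x,\mu)$; $Ux=x\circ\varphi$, $V=U^*$. $\mathrm{W^*O}$-convergence $T_n\to T$ means $(x,T_n\mu)\to(x,T\mu)$ for all $x\in X,\mu\in X^*$. A sequence $\{V_n\}\subseteq\operatorname{co}\{V^k:k\in\mathbb{N}_0\}$ is ergodic if $(x,(\operatorname{Id}-V)V_n\mu)\to0$ for all $x\in X,\mu\in X^*$. $\delta_\omega$ is the Dirac measure at $\omega$; thus $Q\delta_\omega$ is the weak-star limit of $V_n\delta_\omega$. *)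

From HB Require Import structures.
From mathcomp Require Import all_boot all_order all_algebra.
From mathcomp Require Import all_classical all_reals all_analysis.
Set Implicit Arguments. Unset Strict Implicit. Unset Printing Implicit Defensive.
Import Order.TTheory GRing.Theory Num.Theory.
Import numFieldNormedType.Exports.
Local Open Scope classical_set_scope.
Local Open Scope ring_scope.

Section Defs.
Context {R : realType} {T : ptopologicalType}.

(** X = C(Omega) (real-valued): functions T -> R that are continuous.
    Elements of X^* are represented as maps (T -> R) -> R whose restriction
    to C(Omega) is linear and bounded; only their values on C(Omega) matter. *)
Definition functional := (T -> R) -> R.

Definition in_Xstar (F : functional) : Prop :=
  (forall (a : R) (f g : T -> R), continuous f -> continuous g ->
      F (fun t => a * f t + g t) = a * F f + F g) /\
  (exists M : R, forall f : T -> R, continuous f ->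
      (forall t, `|f t| <= 1) -> `|F f| <= M).

Definition Xstar_eq (F G : functional) : Prop :=
  forall x : T -> R, continuous x -> F x = G x.

Definition delta_fun (w : T) : functional := fun x => x w.

(** V = U^*, where U x = x \o phi: (x, V mu) = (x \o phi, mu). *)
Definition Vop (phi : T -> T) (mu : functional) : functional :=
  fun x => mu (x \o phi).

Definition convVpow (phi : T -> T) (c : seq R) (mu : functional) : functional :=
  fun x => \sum_(k < size c) c`_k * mu (x \o iter k phi).

Definition convex_coeffs (c : seq R) : Prop :=
  all (fun a => 0 <= a) c /\ \sum_(k < size c) c`_k = 1.
End Defs.

Notation borel T := (g_sigma_algebraType (@open T)).

Definition ergodic_measure {R : realType} {T : ptopologicalType}
  (phi : T -> T) (mu : probability (borel T) R) : Prop :=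
  (forall A : set (borel T), measurable A -> mu (phi @^-1` A) = mu A) /\
  (forall A : set (borel T), measurable A -> phi @^-1` A = A ->
      mu A = 0%E \/ mu A = 1%E).

From HB Require Import structures.
From mathcomp Require Import all_boot all_order all_algebra.
From mathcomp Require Import all_classical all_reals all_analysis.
From mathcomp Require Import measurable_realfun.
From mathcomp Require Import lra.
Import Order.TTheory GRing.Theory Num.Theory.
Import numFieldNormedType.Exports.
Local Open Scope classical_set_scope.
Local Open Scope ring_scope.

(* For continuous x, the map w |-> (x, Q delta_w) is the pointwise limit of the
   continuous orbit means sum_k c_k x (phi^k w), hence Borel; it is
   phi-invariant because the sequence V_n is ergodic, and by dominated
   convergence and the phi-invariance of mu it has the same mu-integral as x.
   An invariant integrable function is a.e. constant for an ergodic mu, so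
   (x, Q delta_w) = int x dmu for mu-a.e. w.  Both sides are 1-Lipschitz in x
   for the sup norm and C(Omega) is separable (partitions of unity subordinate
   to finite 1/n-nets, with rational coefficients), so the condition for all x
   reduces to countably many x: Omega_mu is a countable intersection of Borel
   sets of full measure. *)

Section truncated_distance.
Context {R : realType} {T : pseudoPMetricType R}.

(* [edist] may be +oo; truncating it at 1 gives a real-valued pseudometric
   with the same small balls. *)
Definition tdist (a t : T) : R :=
  if edist (a, t) is r%:E then Num.min r 1 else 1.

Lemma tdist_sym a t : tdist a t = tdist t a.
Proof. by rewrite /tdist edist_sym. Qed.

Lemma tdist_refl a : tdist a a = 0.
Proof. by rewrite /tdist edist_refl; apply/min_idPl. Qed.

Lemma tdist_triangle a t s : tdist a s <= tdist a t + tdist t s.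
Proof.
have := edist_triangle a t s; rewrite /tdist.
have := edist_ge0 (a, t); have := edist_ge0 (t, s); have := edist_ge0 (a, s).
case: (edist (a, s)) => [r3| |] //; case: (edist (a, t)) => [r1| |] //;
  case: (edist (t, s)) => [r2| |] //=; rewrite ?lee_fin.
all: by rewrite /Num.min => *; repeat case: ifP => ?; lra.
Qed.

Lemma tdist_le_ball {a t r} : 0 < r -> ball a r t -> tdist a t <= r.
Proof.
move=> r0 art; have := @edist_fin _ _ _ (a, t) r0 art.
rewrite /tdist; have := edist_ge0 (a, t).
by case: (edist (a, t)) => [s||] //= _ sr; rewrite ge_min -lee_fin sr.
Qed.

Lemma ball_tdist_lt {a t r} : r <= 1 -> tdist a t < r -> ball a r t.
Proof.
move=> r1 atr; apply: (@edist_lt_ball _ _ _ (a, t)).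
move: atr; rewrite /tdist; case: (edist (a, t)) => [s||].
- by rewrite lte_fin gt_min => /orP[//|]; rewrite ltNge r1.
- by rewrite ltNge r1.
- by rewrite ltNye.
Qed.

Lemma continuous_tdist a : continuous (tdist a).
Proof.
move=> t; apply/cvgrPdist_le => e e0; near=> s.
have ts : ball t e s by near: s; exact: nbhsx_ballx.
have := tdist_triangle a t s; have := tdist_triangle a s t.
have := tdist_le_ball e0 ts; rewrite tdist_sym => st.
by move=> h1 h2; rewrite ler_norml; apply/andP; split; lra.
Unshelve. all: by end_near. Qed.

Lemma open_tdist_lt a r : open [set s | tdist a s < r].
Proof. exact: (continuousP _).1 (@continuous_tdist a) _ (@open_lt _ r). Qed.

End truncated_distance.

Lemma continuous_sum {R : realType} {T : topologicalType} (I : Type) (L : seq I)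
    (F : I -> T -> R) :
  (forall i, continuous (F i)) -> continuous (fun s => \sum_(i <- L) F i s).
Proof. by move=> cF; apply: continuous_big => //; exact: add_continuous. Qed.

Lemma compact_finite_subcover {T : ptopologicalType} {U : T -> set T} :
  compact [set: T] -> (forall t, open (U t)) -> (forall t, U t t) ->
  exists L : seq T, forall s, exists2 t, t \in L & U t s.
Proof.
move=> + oU Ut; rewrite compact_cover => /(_ T [set: T] U) cov.
have [t _|s _|D _ covD] := cov; [exact: oU|by exists s|].
by exists (finmap.enum_fset D) => s; have [t /= tD] := covD s I; exists t.
Qed.

Section weighted_mean.
Context {R : realType} {T : topologicalType}.
Context {I : eqType} {L : seq I} {w : I -> T -> R} (q : I -> R).
Hypothesis w_ge0 : forall i s, 0 <= w i s.
Hypothesis w_cover : forall s, exists2 i, i \in L & 0 < w i s.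

Lemma weighted_sum_gt0 s : 0 < \sum_(i <- L) w i s.
Proof.
by have [i iL wi0] := w_cover s; rewrite (big_rem i) //= ltr_wpDr ?sumr_ge0.
Qed.

Lemma continuous_weighted_mean : (forall i, continuous (w i)) ->
  continuous (fun s => (\sum_(i <- L) q i * w i s) / \sum_(i <- L) w i s).
Proof.
move=> cw s; apply: cvgM.
  by apply: continuous_sum => i t; apply: cvgM; [exact: cvg_cst|exact: cw].
by apply: cvgV; [rewrite gt_eqF ?weighted_sum_gt0|exact: continuous_sum].
Qed.

Lemma weighted_mean_close (x : T -> R) (e : R) (s : T) :
  (forall i, i \in L -> 0 < w i s -> `|x s - q i| <= e) ->
  `|x s - (\sum_(i <- L) q i * w i s) / \sum_(i <- L) w i s| <= e.
Proof.
move=> close; set D := \sum_(j <- L) w j s; have D0 := weighted_sum_gt0 s.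
have -> : x s - (\sum_(j <- L) q j * w j s) / D =
    (\sum_(j <- L) w j s * (x s - q j)) / D.
  rewrite -{1}(mulfK (lt0r_neq0 D0) (x s)) -mulrBl mulr_sumr -sumrB.
  by congr (_ / _); apply: eq_bigr => j _; rewrite mulrBr mulrC [q j * _]mulrC.
rewrite normrM normfV (gtr0_norm D0) ler_pdivrMr // mulr_sumr.
apply: le_trans (ler_norm_sum _ _ _) _; rewrite !big_seq; apply: ler_sum => j jL.
rewrite normrM ger0_norm // mulrC.
have := w_ge0 j s; rewrite le0r => /orP[/eqP->|wj0]; first by rewrite !mulr0.
by apply: ler_wpM2r; [exact: ltW|exact: close].
Qed.

End weighted_mean.

Section countable_dense.
Context {R : realType} {T : pseudoPMetricType R}.
Hypothesis compactT : compact [set: T].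

Definition radius (n : nat) : R := n.+1%:R^-1.

Lemma radius_gt0 n : 0 < radius n.
Proof. by rewrite invr_gt0. Qed.

Lemma exists_net n :
  exists L : seq T, forall s, exists2 t, t \in L & tdist t s < radius n.
Proof.
apply: compact_finite_subcover compactT _ _ => [t|t]; first exact: open_tdist_lt.
by rewrite /= tdist_refl radius_gt0.
Qed.

Definition net n : seq T := projT1 (cid (exists_net n)).

Definition center (p : nat * nat) : T := nth point (net p.1) p.2.

Lemma exists_center n t : exists k, tdist (center (n, k)) t < radius n.
Proof.
have [c cnet ct] := projT2 (cid (exists_net n)) t.
by exists (index c (net n)); rewrite /center nth_index.
Qed.

Definition bump (p : nat * nat) (s : T) : R :=
  Num.max 0 (radius p.1 - tdist (center p) s).

Lemma bump_ge0 p s : 0 <= bump p s.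
Proof. by rewrite le_max lexx. Qed.

Lemma bump_gt0 p s : (0 < bump p s) = (tdist (center p) s < radius p.1).
Proof. by rewrite /bump lt_max ltxx subr_gt0. Qed.

Lemma continuous_bump p : continuous (bump p).
Proof.
move=> s; have := @continuous_max _ _ (cst 0)
  (fun s => radius p.1 - tdist (center p) s) s.
apply; first exact: cvg_cst.
by apply: cvgB; [exact: cvg_cst|exact: continuous_tdist].
Qed.

Lemma exists_local_center {x : T -> R} {e : R} (t : T) : continuous x -> 0 < e ->
  exists p, tdist (center p) t < radius p.1 /\
    forall s, tdist (center p) s < radius p.1 -> `|x s - x (center p)| < e.
Proof.
move=> cx e0; have e20 : 0 < e / 2 by rewrite divr_gt0.
have [rho rho0 near_t] := (nbhs_ballP _ _).1 ((cvgrPdist_lt _ _).1 (cx t) _ e20).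
pose r := Num.min rho 1.
have r_rho : r <= rho by rewrite ge_min lexx.
have r1 : r <= 1 by rewrite ge_min lexx orbT.
have r0 : 0 < r / 2 by rewrite divr_gt0 // lt_min rho0 ltr01.
have [n rn] := ltr_add_invr r0.
rewrite add0r -/(radius n) in rn.
have [k ck] := exists_center n t; exists (n, k); split => // s cs /=.
have close_t z : tdist (center (n, k)) z < radius n -> `|x t - x z| < e / 2.
  move=> cz; apply: near_t; apply: (le_ball r_rho); apply: ball_tdist_lt r1 _.
  have := tdist_triangle t (center (n, k)) z; rewrite (tdist_sym t (center _)); lra.
have := close_t _ cs; have := close_t (center (n, k)).
rewrite tdist_refl radius_gt0 => /(_ isT).
have := ler_distD (x t) (x s) (x (center (n, k))); rewrite (distrC (x s) (x t)); lra.
Qed.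

Definition pu_approx (i : seq ((nat * nat) * rat)) (s : T) : R :=
  (\sum_(p <- i) ratr p.2 * bump p.1 s) / \sum_(p <- i) bump p.1 s.

Lemma pu_approx_close {x : T -> R} {e : R} : continuous x -> 0 < e ->
  exists i, continuous (pu_approx i) /\ forall s, `|x s - pu_approx i s| <= e.
Proof.
move=> cx e0; have e20 : 0 < e / 2 by rewrite divr_gt0.
pose p t := projT1 (cid (exists_local_center t cx e20)).
have pP t := projT2 (cid (exists_local_center t cx e20)).
have qP t : exists q : rat, `|x (center (p t)) - ratr q| < e / 2.
  have [q] := @rat_in_itvoo R (x (center (p t)) - e / 2) (x (center (p t)) + e / 2)
    ltac:(lra).
  rewrite in_itv /= => /andP[q1 q2]; exists q.
  by rewrite ltr_norml; apply/andP; split; lra.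
pose q t := projT1 (cid (qP t)).
have [L coverL] := compact_finite_subcover compactT
  (fun t => open_tdist_lt (center (p t)) (radius (p t).1)) (fun t => (pP t).1).
pose i := [seq (p t, q t) | t <- L].
have i_cover s : exists2 j, j \in i & 0 < bump j.1 s.
  by have [t tL ts] := coverL s; exists (p t, q t); [exact: map_f|rewrite bump_gt0].
exists i; split.
  apply: (continuous_weighted_mean _ (fun j => bump_ge0 j.1) i_cover) => j.
  exact: continuous_bump.
move=> s; apply: (weighted_mean_close _ (fun j => bump_ge0 j.1) i_cover).
move=> _ /mapP[t _ ->].
rewrite /= bump_gt0 => cs; have := (pP t).2 s cs; have := projT2 (cid (qP t)).
have := ler_distD (x (center (p t))) (x s) (ratr (q t)); rewrite -/(q t); lra.
Qed.

Lemma countable_dense_continuous : exists D : nat -> T -> R,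
  (forall n, continuous (D n)) /\
  forall x, continuous x -> forall e, 0 < e -> exists n, forall t, `|x t - D n t| <= e.
Proof.
(* [pu_approx i] is discontinuous where its denominator vanishes (_ / 0 = 0),
   so only the continuous approximants are kept. *)
pose D n : T -> R := if unpickle n is Some i then
  if pselect (continuous (pu_approx i)) is left _ then pu_approx i else cst 0
  else cst 0.
exists D; split => [n|x cx e e0].
  rewrite /D; case: (unpickle n) => [i|]; last exact: cst_continuous.
  by case: pselect => // _; exact: cst_continuous.
have [i [ci close]] := pu_approx_close cx e0.
by exists (pickle i); rewrite /D pickleK; case: pselect.
Qed.

End countable_dense.

Section borel_continuous.
Context {R : realType} {T : ptopologicalType}.

Lemma continuous_borel_measurable {f : T -> R} :
  continuous f -> measurable_fun [set: borel T] (f : borel T -> R).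
Proof.
move=> cf; apply: (measurability _ (RGenOpens.measurableE R)).
move=> _ [_ [a [b ->] <-]]; rewrite setTI; apply: sub_sigma_algebra.
by move/continuousP : cf; apply; exact: interval_open.
Qed.

Lemma continuous_borel_measurable_endo {f : T -> T} :
  continuous f -> measurable_fun [set: borel T] (f : borel T -> borel T).
Proof.
move=> cf; apply: (@measurability _ _ (borel T) (borel T) _ _ open) => //.
by move=> _ [B oB <-]; rewrite setTI; apply: sub_sigma_algebra; exact: (continuousP _).1.
Qed.

Lemma continuous_compact_bounded {f : T -> R} : compact [set: T] ->
  continuous f -> exists M, forall t, `|f t| <= M.
Proof.
move=> cT cf; have : compact (f @` [set: T]).
  by apply: continuous_compact => //; exact: continuous_subspaceT.
case/compact_bounded => M0 [_ M0f]; exists (M0 + 1) => t.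
by apply: M0f; [rewrite ltrDl|exists t].
Qed.

Variable mu : probability (borel T) R.

Lemma bounded_integrable {f : borel T -> R} {M : R} : measurable_fun setT f ->
  (forall w, `|f w| <= M) -> mu.-integrable [set: borel T] (EFin \o f).
Proof.
move=> mf fM; apply: measurable_bounded_integrable => //.
  by rewrite (le_lt_trans (probability_le1 _ _)) ?ltry.
exists M; split; first exact: num_real.
by move=> y My t _; apply: le_trans (fM t) (ltW My).
Qed.

Lemma continuous_integrable {f : T -> R} : compact [set: T] -> continuous f ->
  mu.-integrable [set: borel T] (EFin \o (f : borel T -> R)).
Proof.
move=> cT cf; have [M fM] := continuous_compact_bounded cT cf.
exact: bounded_integrable (continuous_borel_measurable cf) fM.
Qed.

End borel_continuous.

Section integral0.
Context {d} {T : measurableType d} {R : realType} {mu : {measure set T -> \bar R}}.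

Lemma integral0_ae_eq0 {f : T -> R} : mu.-integrable setT (EFin \o f) ->
  {ae mu, forall w, 0 <= f w} -> (\int[mu]_w (f w)%:E = 0)%E ->
  {ae mu, forall w, f w = 0}.
Proof.
move=> fint f0 intf0; have mf := measurable_int mu fint.
have : (\int[mu]_w `|(f w)%:E| = 0)%E.
  rewrite -intf0; apply: ae_eq_integral => //; first exact: measurableT_comp.
  by apply: filterS f0 => w fw _; rewrite /= ger0_norm.
by move/(ae_eq_integral_abs mu measurableT mf); apply: filterS => w /(_ I) [].
Qed.

End integral0.

Section ergodic.
Context {R : realType} {T : ptopologicalType}.
Context {phi : T -> T} {mu : probability (borel T) R}.
Hypothesis mu_ergodic : ergodic_measure phi mu.

Lemma ergodic_invariant_ae_const {f : borel T -> R} :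
  mu.-integrable setT (EFin \o f) -> (forall w, f (phi w) = f w) ->
  {ae mu, forall w, f w = fine (\int[mu]_w (f w)%:E)}.
Proof.
(* The set {m < f} is invariant, hence null or conull; either way f - m has a.e.
   constant sign and integral 0. *)
move=> fint f_inv; set m := fine _.
have mf : measurable_fun setT f by apply/measurable_EFinP; exact: measurable_int fint.
have mint := finite_measure_integrable_cst mu m measurableT.
have fmint := integrableB measurableT fint mint.
have centered (s : R) : s != 0 -> {ae mu, forall w, 0 <= s * (f w - m)} ->
    {ae mu, forall w, f w = m}.
  move=> s0 pos; have gint : mu.-integrable setT (EFin \o (fun w => s * (f w - m))).
    apply: eq_integrable measurableT _ _ _ (integrableZl measurableT s fmint) => w _.
    by rewrite /= EFinM EFinB.
  have gint0 : (\int[mu]_w (s * (f w - m))%:E = 0)%E.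
    under eq_integral do rewrite EFinM EFinB.
    rewrite integralZl // integralB //.
    rewrite integral_cst //= probability_setT mule1 fineK ?integrable_fin_num //.
    by rewrite subee ?mule0 // integrable_fin_num.
  apply: filterS (integral0_ae_eq0 gint pos gint0) => w /eqP.
  by rewrite mulf_eq0 (negbTE s0) subr_eq0 => /eqP.
pose S := [set w : borel T | m < f w].
have mS : measurable S.
  have := mf measurableT `]m, +oo[%classic (measurable_itv _); rewrite setTI.
  by congr measurable; apply/seteqP; split => w /=; rewrite in_itv andbT.
have S_inv : phi @^-1` S = S by apply/seteqP; split => w; rewrite /S /preimage /= f_inv.
have [S0|S1] := mu_ergodic.2 S mS S_inv.
- apply: (centered (-1)); first by rewrite oppr_eq0 oner_neq0.
  by exists S; split => // w /= /negP; rewrite mulN1r oppr_ge0 subr_le0 -ltNge.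
- apply: (centered 1) => //; exists (~` S); split; first exact: measurableC.
    by rewrite probability_setC // S1 subee.
  by move=> w /= /negP; rewrite mul1r subr_ge0 -ltNge => fm /(lt_trans fm); rewrite ltxx.
Qed.

End ergodic.

Lemma norm_convex_sum_le {R : realType} {c : seq R} (f : nat -> R) {e : R} :
  convex_coeffs c -> (forall k, `|f k| <= e) ->
  `|\sum_(k < size c) c`_k * f k| <= e.
Proof.
case=> /allP c0 c1 fe; apply: le_trans (ler_norm_sum _ _ _) _.
apply: (@le_trans _ _ (\sum_(k < size c) c`_k * e)); last by rewrite -mulr_suml c1 mul1r.
apply: ler_sum => k _; have ck := c0 _ (mem_nth 0 (ltn_ord k)).
by rewrite normrM ger0_norm // ler_wpM2l.
Qed.

Definition sup_lipschitz {R : realType} {T : topologicalType} (F : (T -> R) -> R) :=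
  forall (x y : T -> R) (e : R), continuous x -> continuous y ->
    (forall t, `|x t - y t| <= e) -> `|F x - F y| <= e.

Lemma eq_dense_sup_lipschitz {R : realType} {T : topologicalType}
    {D : nat -> T -> R} (F G : (T -> R) -> R) :
  (forall n, continuous (D n)) ->
  (forall x, continuous x ->
    forall e, 0 < e -> exists n, forall t, `|x t - D n t| <= e) ->
  sup_lipschitz F -> sup_lipschitz G -> (forall n, F (D n) = G (D n)) ->
  forall x, continuous x -> F x = G x.
Proof.
move=> cD denseD LF LG FG x cx; apply/eqP; rewrite -subr_eq0 -normr_le0.
apply/ler_addgt0Pr => e e0.
have [n xDn] := denseD x cx (e / 2) (divr_gt0 e0 (ltr0Sn _ 1)).
have := LF _ _ _ cx (cD n) xDn; have := LG _ _ _ cx (cD n) xDn.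
have := ler_distD (F (D n)) (F x) (G x); rewrite FG (distrC (G x)) add0r.
lra.
Qed.

Lemma ae_probability1 d (T : measurableType d) (R : realType) (P : probability T R)
    (A : set T) : measurable A -> {ae P, forall w, A w} -> P A = 1%E.
Proof.
move=> mA [N [mN PN0 notAN]]; apply/eqP; rewrite eq_le probability_le1 //=.
have <- : P (~` N) = 1%E by rewrite probability_setC // PN0 sube0.
apply: le_measure; rewrite ?inE //; first exact: measurableC.
by move=> w /= Nw; apply: contrapT => /notAN.
Qed.

Lemma integral_sup_lipschitz {R : realType} {T : ptopologicalType}
    (mu : probability (borel T) R) : compact [set: T] ->
  sup_lipschitz (fun x : T -> R => fine (\int[mu]_t (x t)%:E)).
Proof.
move=> cT x y e cx cy xy.
have [ix iy] := (continuous_integrable mu cT cx, continuous_integrable mu cT cy).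
have ixy := integrableB measurableT ix iy.
rewrite -lee_fin -abse_EFin.
have <- : (\int[mu]_t ((x t)%:E - (y t)%:E))%E =
    (fine (\int[mu]_t (x t)%:E) - fine (\int[mu]_t (y t)%:E))%:E.
  by rewrite integralB // EFinB !fineK ?integrable_fin_num.
have e0 : 0 <= e := le_trans (normr_ge0 _) (xy point).
apply: le_trans (le_abse_integral _ measurableT (measurable_int _ ixy)) _.
apply: le_trans (integral_le_bound e%:E measurableT (measurable_int _ ixy) _ _) _.
- by rewrite lee_fin.
- by apply: aeW => t _; rewrite /comp -EFinB abse_EFin lee_fin.
- by rewrite /= probability_setT mule1.
Qed.

(* [orbit_mean phi c x w] is [convVpow phi c (delta_fun w) x] unfolded. *)
Definition orbit_mean {R : realType} {T : Type} (phi : T -> T) (c : seq R)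
    (x : T -> R) (w : T) : R :=
  \sum_(k < size c) c`_k * x (iter k phi w).

Definition Qdelta {R : realType} {T : ptopologicalType}
    (Q : @functional R T -> @functional R T) (x : T -> R) (w : T) : R :=
  Q (delta_fun w) x.

Lemma in_Xstar_delta {R : realType} {T : ptopologicalType} (w : T) :
  in_Xstar (R := R) (delta_fun w).
Proof. by split => [//|]; exists 1 => f _ /(_ w). Qed.

Section orbit_means.
Context {R : realType} {T : ptopologicalType}.
Context {phi : T -> T} {c : nat -> seq R} {Q : @functional R T -> @functional R T}.
Hypothesis c_convex : forall n, convex_coeffs (c n).
Hypothesis cvg_Q : forall mu (x : T -> R), in_Xstar mu -> continuous x ->
  (fun n => convVpow phi (c n) mu x) @ \oo --> Q mu x.
Hypothesis ergodic_c : forall mu (x : T -> R), in_Xstar mu -> continuous x ->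
  (fun n => convVpow phi (c n) mu x - Vop phi (convVpow phi (c n) mu) x) @ \oo --> 0.

Lemma cvg_orbit_mean (x : T -> R) (w : T) : continuous x ->
  orbit_mean phi (c n) x w @[n --> \oo] --> Qdelta Q x w.
Proof. exact: cvg_Q (in_Xstar_delta w). Qed.

Lemma norm_Qdelta_le (x : T -> R) (e : R) (w : T) : continuous x ->
  (forall t, `|x t| <= e) -> `|Qdelta Q x w| <= e.
Proof.
move=> cx xe; apply: cvgr_to_le (cvg_norm (cvg_orbit_mean x w cx)) _.
near=> n; apply: (norm_convex_sum_le (fun k => x (iter k phi w))) => // k.
Unshelve. all: by end_near. Qed.

Lemma Qdelta_sup_lipschitz (w : T) : sup_lipschitz (Qdelta Q ^~ w).
Proof.
move=> x y e cx cy xy.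
apply: cvgr_to_le (cvg_norm (cvgB (cvg_orbit_mean x w cx) (cvg_orbit_mean y w cy))) _.
near=> n; rewrite !fctE /orbit_mean -sumrB.
under eq_bigr do rewrite -mulrBr.
by apply: (norm_convex_sum_le (fun k => x (iter k phi w) - y (iter k phi w))).
Unshelve. all: by end_near. Qed.

Lemma Qdelta_comp (x : T -> R) (w : T) : continuous x ->
  Qdelta Q x (phi w) = Qdelta Q x w.
Proof.
(* V moves the orbit one step, so ergodicity of the sequence says that the
   means at phi w and at w have the same limit. *)
move=> cx; have shift n : orbit_mean phi (c n) x (phi w) = orbit_mean phi (c n) x w -
    (convVpow phi (c n) (delta_fun w) x - Vop phi (convVpow phi (c n) (delta_fun w)) x).
  rewrite opprB addrC subrK /Vop /convVpow /orbit_mean.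
  by apply: eq_bigr => k _; rewrite /delta_fun /= -iterSr.
have : orbit_mean phi (c n) x (phi w) @[n --> \oo] --> Qdelta Q x w - 0.
  under eq_cvg do rewrite shift.
  apply: cvgB; first exact: cvg_orbit_mean.
  exact: ergodic_c (in_Xstar_delta w) cx.
by rewrite subr0; exact: cvg_unique (cvg_orbit_mean x (phi w) cx).
Qed.

End orbit_means.

Lemma continuous_iter {T : topologicalType} {f : T -> T} (k : nat) :
  continuous f -> continuous (iter k f).
Proof.
move=> cf; elim: k => [|k IHk] t /=; first exact: cvg_id.
exact: continuous_comp (IHk t) (cf _).
Qed.

Section invariant_integrals.
Context {R : realType} {T : ptopologicalType}.
Context {phi : T -> T} {c : nat -> seq R} {Q : @functional R T -> @functional R T}.
Context {mu : probability (borel T) R}.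
Hypothesis compactT : compact [set: T].
Hypothesis phi_cont : continuous phi.
Hypothesis c_convex : forall n, convex_coeffs (c n).
Hypothesis cvg_Q : forall mu (x : T -> R), in_Xstar mu -> continuous x ->
  (fun n => convVpow phi (c n) mu x) @ \oo --> Q mu x.
Hypothesis mu_invariant :
  forall A : set (borel T), measurable A -> mu (phi @^-1` A) = mu A.

Lemma continuous_comp_iter (x : T -> R) (k : nat) :
  continuous x -> continuous (x \o iter k phi).
Proof. by move=> cx t; exact: continuous_comp (continuous_iter k phi_cont t) (cx _). Qed.

Lemma continuous_orbit_mean (x : T -> R) (n : nat) :
  continuous x -> continuous (orbit_mean phi (c n) x).
Proof.
move=> cx; apply: continuous_sum => k t; apply: cvgM; first exact: cvg_cst.
exact: continuous_comp_iter.
Qed.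

Lemma measurable_Qdelta (x : T -> R) : continuous x ->
  measurable_fun setT (Qdelta Q x : borel T -> R).
Proof.
move=> cx.
apply: (@measurable_fun_cvg _ (borel T) R setT (fun n => orbit_mean phi (c n) x)).
  by move=> n; exact: continuous_borel_measurable (continuous_orbit_mean x n cx).
by move=> w _; exact: cvg_orbit_mean cvg_Q x w cx.
Qed.

Lemma integrable_Qdelta (x : T -> R) : continuous x ->
  mu.-integrable setT (EFin \o (Qdelta Q x : borel T -> R)).
Proof.
move=> cx; have [M xM] := continuous_compact_bounded compactT cx.
apply: (bounded_integrable mu (measurable_Qdelta x cx)) => w.
exact: norm_Qdelta_le c_convex cvg_Q x M w cx xM.
Qed.

Local Open Scope ereal_scope.

Lemma integral_comp_phi (f : T -> R) : continuous f ->
  \int[mu]_w (f (phi w))%:E = \int[mu]_w (f w)%:E.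
Proof.
move=> cf; have mphi := continuous_borel_measurable_endo phi_cont.
rewrite [RHS](eq_measure_integral (pushforward mu (phi : borel T -> borel T)));
  last by move=> A mA _; exact/esym/mu_invariant.
rewrite integral_pushforward //.
- exact: measurable_int (continuous_integrable mu compactT cf).
- rewrite preimage_setT.
  exact (continuous_integrable mu compactT (continuous_comp_iter f 1 cf)).
Qed.

Lemma integral_comp_iter (f : T -> R) (k : nat) : continuous f ->
  \int[mu]_w (f (iter k phi w))%:E = \int[mu]_w (f w)%:E.
Proof.
move=> cf; elim: k => [//|k IHk].
rewrite -IHk -(integral_comp_phi _ (continuous_comp_iter f k cf)).
by apply: eq_integral => w _; rewrite iterSr.
Qed.

Lemma integral_orbit_mean (x : T -> R) (n : nat) : continuous x ->
  \int[mu]_w (orbit_mean phi (c n) x w)%:E = \int[mu]_w (x w)%:E.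
Proof.
move=> cx.
have xfin := integrable_fin_num measurableT (continuous_integrable mu compactT cx).
have iter_int k := continuous_integrable mu compactT (continuous_comp_iter x k cx).
rewrite /orbit_mean; under eq_integral do rewrite -sumEFin.
rewrite integral_sum //; last first.
  move=> k; have ck : continuous (fun w => (c n)`_k * x (iter k phi w))%R.
    by move=> t; apply: cvgM; [exact: cvg_cst|exact: continuous_comp_iter].
  exact (continuous_integrable mu compactT ck).
transitivity (\sum_(k < size (c n)) ((c n)`_k)%:E * \int[mu]_w (x w)%:E).
  apply: eq_bigr => k _; under eq_integral do rewrite EFinM.
  by rewrite integralZl ?integral_comp_iter //; exact: iter_int.
rewrite -(fineK xfin); under eq_bigr do rewrite -EFinM.
by rewrite sumEFin -mulr_suml (proj2 (c_convex n)) mul1r.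
Qed.

Lemma integral_Qdelta (x : T -> R) : continuous x ->
  \int[mu]_w (Qdelta Q x w)%:E = \int[mu]_w (x w)%:E.
Proof.
move=> cx; have [M xM] := continuous_compact_bounded compactT cx.
pose f_ n w := (orbit_mean phi (c n) x w)%:E.
have mf_ n : measurable_fun setT (f_ n : borel T -> \bar R).
  apply/measurable_EFinP.
  exact: continuous_borel_measurable (continuous_orbit_mean x n cx).
have mQ : measurable_fun setT (EFin \o (Qdelta Q x : borel T -> R)).
  by apply/measurable_EFinP; exact: measurable_Qdelta.
have f_Q : {ae mu, forall w, setT w -> f_ ^~ w @ \oo --> (Qdelta Q x w)%:E}.
  by apply: aeW => w _; apply: cvg_EFin; [exact: nearW|exact: cvg_orbit_mean].
have f_M : {ae mu, forall w n, setT w -> `|f_ n w| <= M%:E}.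
  apply: aeW => w n _; rewrite lee_fin.
  by apply: (norm_convex_sum_le (fun k => x (iter k phi w))) => // k.
have [_ _] := dominated_convergence measurableT mf_ mQ f_Q
  (continuous_integrable mu compactT (cst_continuous (x := M))) f_M.
under eq_fun do rewrite integral_orbit_mean //.
by move=> cvg_int; exact: cvg_unique _ cvg_int (cvg_cst _).
Qed.

End invariant_integrals.

Section ergodic_limit.
Context {R : realType} {T : ptopologicalType}.
Context {phi : T -> T} {c : nat -> seq R} {Q : @functional R T -> @functional R T}.
Context {mu : probability (borel T) R}.
Hypothesis compactT : compact [set: T].
Hypothesis phi_cont : continuous phi.
Hypothesis c_convex : forall n, convex_coeffs (c n).
Hypothesis cvg_Q : forall mu (x : T -> R), in_Xstar mu -> continuous x ->
  (fun n => convVpow phi (c n) mu x) @ \oo --> Q mu x.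
Hypothesis ergodic_c : forall mu (x : T -> R), in_Xstar mu -> continuous x ->
  (fun n => convVpow phi (c n) mu x - Vop phi (convVpow phi (c n) mu) x) @ \oo --> 0.
Hypothesis mu_ergodic : ergodic_measure phi mu.

Lemma ae_Qdelta_eq_integral (x : T -> R) : continuous x ->
  {ae mu, forall w, Qdelta Q x w = fine (\int[mu]_t (x t)%:E)}.
Proof.
move=> cx; rewrite -(integral_Qdelta compactT phi_cont c_convex cvg_Q mu_ergodic.1 x cx).
have Qint := integrable_Qdelta (mu := mu) compactT phi_cont c_convex cvg_Q x cx.
exact (ergodic_invariant_ae_const mu_ergodic Qint
  (fun w => Qdelta_comp cvg_Q ergodic_c x w cx)).
Qed.

End ergodic_limit.

Theorem corollary4p2 (R : realType) (T : pseudoPMetricType R)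
  (hT2 : hausdorff_space T) (hTc : compact [set: T])
  (phi : T -> T) (hphi : continuous phi)
  (c : nat -> seq R) (hc : forall n, convex_coeffs (c n))
  (Q : @functional R T -> @functional R T)
  (hQX : forall mu, in_Xstar mu -> in_Xstar (Q mu))
  (hQlin : forall (a : R) mu nu, in_Xstar mu -> in_Xstar nu ->
     Xstar_eq (Q (fun x => a * mu x + nu x)) (fun x => a * Q mu x + Q nu x))
  (hQ : forall mu (x : T -> R), in_Xstar mu -> continuous x ->
     (fun n => convVpow phi (c n) mu x) @ \oo --> Q mu x)
  (herg : forall mu (x : T -> R), in_Xstar mu -> continuous x ->
     (fun n => convVpow phi (c n) mu x - Vop phi (convVpow phi (c n) mu) x)
       @ \oo --> 0)
  (mu : probability (borel T) R) (hmu : ergodic_measure phi mu) :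
  let Omega_mu := [set w : borel T |
      forall x : T -> R, continuous x ->
        ((Q (delta_fun w) x)%:E = \int[mu]_t (x t)%:E)%E] in
  measurable Omega_mu /\ mu Omega_mu = 1%E.
Proof.
move=> Omega_mu; have [D [cD denseD]] := countable_dense_continuous hTc.
pose mean x := fine (\int[mu]_t (x t)%:E).
have OmegaE : Omega_mu = \bigcap_n (Qdelta Q (D n) @^-1` [set mean (D n)]).
  apply/seteqP; split => [w Ow n _|w Dw x cx] /=; first by rewrite /mean -(Ow _ (cD n)).
  rewrite -(fineK (integrable_fin_num measurableT (continuous_integrable mu hTc cx))).
  congr EFin; apply: (eq_dense_sup_lipschitz (Qdelta Q ^~ w) mean cD denseD) => //.
  - exact: Qdelta_sup_lipschitz hc hQ w.
  - exact: integral_sup_lipschitz mu hTc.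
  - by move=> n; exact: Dw n I.
have mOmega : measurable Omega_mu.
  rewrite OmegaE; apply: bigcapT_measurable => n; rewrite -[_ @^-1` _]setTI.
  exact: measurable_Qdelta hphi hQ (D n) (cD n) measurableT _ (measurable_set1 _).
split => //; apply: ae_probability1 mOmega _.
have ae_mean n := ae_Qdelta_eq_integral hTc hphi hc hQ herg hmu (D n) (cD n).
apply: filterS (ae_foralln ae_mean).
by move=> w Dw; rewrite OmegaE => n _; exact: Dw.
Qed.
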